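(* Let $n \geq 1$ and let $D_n'$ be the digraph defined in the context. For any $u, v, w \in V(D_n')$, it is not the case that all of $uv$, $vw$, $uw$ are edges of $D_n'$. (That is, $D_n'$ contains no transitive tournament on three vertices.)
   Context: Digraphs $D_n$ are defined recursively. $D_1$ is a single vertex with no edges. For $n \geq 2$, take $n-1$ disjoint copies $D_{n-1}^1,\dots,D_{n-1}^{n-1}$ of $D_{n-1}$; let $\mathcal{T}$ be the set of all sequences $T=(x_1,\dots,x_{n-1})$ with $x_i \in V(D_{n-1}^i)$ for each $i$. For each $T \in \mathcal{T}$ add a new vertex $v_T$ and, for each $i \in \{1,\dots,n-1\}$, an edge from $x_i$ to $v_T$. The resulting digraph is $D_n$. It is a known fact that $D_n$ is acyclic and that for any two vertices $u,v$ of $D_n$ there is at most one directed path from $u$ to $v$ in $D_n$. The length of a path is its number of edges. The digraph $D_n'$ has $V(D_n')=V(D_n)$ and, for every ordered pair $(u,v)$ of vertices such that there is a directed path in $D_n$ from $u$ to $v$: if that path has length $\equiv 1 \pmod 3$, $D_n'$ has the edge $uv$, called positive; if that path has length $\equiv 2 \pmod 3$, $D_n'$ has the edge $vu$, called negative. $D_n'$ has no other edges. *)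

From mathcomp Require Import all_boot.
Set Implicit Arguments. Unset Strict Implicit. Unset Printing Implicit Defensive.

(* Vtx k = vertex set of D_(k+1).
   D_(k+2) : k+1 disjoint copies of D_(k+1), a vertex of copy i being (i, a)
   (copies indexed by 'I_(k+1), i.e. 0..k instead of 1..k+1), plus one new
   vertex v_T for every T : 'I_(k+1) -> Vtx k choosing x_i in copy i. *)
Fixpoint Vtx (k : nat) : Type :=
  match k with
  | 0 => unit
  | k'.+1 => (('I_k'.+1 * Vtx k') + ('I_k'.+1 -> Vtx k'))%type
  end.

Fixpoint Edge (k : nat) : Vtx k -> Vtx k -> Prop :=
  match k return Vtx k -> Vtx k -> Prop with
  | 0 => fun _ _ => False
  | k'.+1 => fun x y =>
      match x, y with
      | inl (i, a), inl (j, b) => i = j /\ Edge a b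
      | inl (i, a), inr T => T i = a                  (* edge x_i -> v_T *)
      | _, _ => False
      end
  end.

Definition DV (n : nat) : Type := Vtx n.-1.
Definition DE (n : nat) : DV n -> DV n -> Prop := @Edge n.-1.

(* DPath n u v l : there is a directed path (walk; D_n is acyclic so these
   coincide) of length l from u to v in D_n. *)
Inductive DPath (n : nat) : DV n -> DV n -> nat -> Prop :=
  | DPath0 (x : DV n) : DPath x x 0
  | DPathS (x y z : DV n) (l : nat) : DE x y -> DPath y z l -> DPath x z l.+1.

Definition DE' (n : nat) (u v : DV n) : Prop :=
  (exists l, DPath u v l /\ l %% 3 = 1)
  \/ (exists l, DPath v u l /\ l %% 3 = 2).

From mathcomp Require Import all_boot zify.
Set Implicit Arguments. Unset Strict Implicit.

(* In D_n any two vertices are joined by directed paths of one length only.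
   Each edge uv of D_n' is a path between u and v whose length, taken with a
   sign according to its direction, is 1 mod 3.  For a triangle uv, vw, uw,
   two of the three paths concatenate to a path parallel to the third (or to
   a closed path, of length 0), so the signed lengths would satisfy
   1 + 1 = 1 mod 3. *)

Section Walks.

Variables (T : Type) (R : T -> T -> Prop).

Inductive walk : T -> T -> nat -> Prop :=
  | walk0 x : walk x x 0
  | walkS x y z l : R x y -> walk y z l -> walk x z l.+1.

Lemma walk_cat x y z l1 l2 : walk x y l1 -> walk y z l2 -> walk x z (l1 + l2).
Proof.
by elim=> [//|a b c l Rab _ IH] /IH walk_bz; rewrite addSn; apply: walkS Rab _.
Qed.

End Walks.

Lemma DPath_walk n (x y : DV n) l : DPath x y l -> walk (@Edge n.-1) x y l.
Proof. by elim=> [z|a b c m Eab _ IH]; [apply: walk0 | apply: walkS Eab IH]. Qed.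

Lemma walk_inr k (f : 'I_k.+1 -> Vtx k) (z : Vtx k.+1) l :
  walk (@Edge k.+1) (inr f) z l -> z = inr f /\ l = 0.
Proof.
move E: (inr f : Vtx k.+1) => x walk_xz.
case: walk_xz E => [//|a b c m Eab _ Ea]; subst a.
by case: b Eab => [[]|].
Qed.

Lemma walk_inl k (i : 'I_k.+1) (a : Vtx k) (z : Vtx k.+1) l :
  walk (@Edge k.+1) (inl (i, a)) z l ->
  (exists b, z = inl (i, b) /\ walk (@Edge k) a b l) \/
  (exists f m, z = inr f /\ l = m.+1 /\ walk (@Edge k) a (f i) m).
Proof.
move E: (inl (i, a) : Vtx k.+1) => x walk_xz.
elim: walk_xz a E => [x0 a Ex|x0 y z' m Exy walk_yz IH a Ex]; subst x0.
  by left; exists a; split=> //; apply: walk0.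
case: y Exy walk_yz IH => [[j b] [<- Eab]|f Eaf] walk_yz IH.
  case: (IH b erefl) => [[c [-> walk_bc]]|[f [m' [-> [-> walk_bf]]]]].
    by left; exists c; split=> //; apply: walkS Eab walk_bc.
  by right; exists f, m'.+1; do 2!split=> //; apply: walkS Eab walk_bf.
have [-> ->] := walk_inr walk_yz.
by right; exists f, 0; do 2!split=> //; rewrite [f i]Eaf; apply: walk0.
Qed.

Lemma walk_Edge_length_uniq k (x y : Vtx k) l1 l2 :
  walk (@Edge k) x y l1 -> walk (@Edge k) x y l2 -> l1 = l2.
Proof.
elim: k x y l1 l2 => [|k IH] x y l1 l2.
  by case=> [?|? ? ? ? []]; case=> [?|? ? ? ? []].
case: x => [[i a]|f] walk1 walk2; last first.
  by have [_ ->] := walk_inr walk1; have [_ ->] := walk_inr walk2.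
case: (walk_inl walk1) => [[b [Eb walk_ab]]|[f [m [Ef [-> walk_af]]]]];
case: (walk_inl walk2) => [[b' [Eb' walk_ab']]|[f' [m' [Ef' [-> walk_af']]]]];
subst y => //.
- by case: Eb' walk_ab' => <-; apply: IH walk_ab.
- by case: Ef' walk_af' => <- /(IH _ _ _ _ walk_af) ->.
Qed.

Lemma walk_Edge_closed k (x : Vtx k) l : walk (@Edge k) x x l -> l = 0.
Proof. by move/walk_Edge_length_uniq; apply; apply: walk0. Qed.

Theorem lemma2p3 (n : nat) (hn : 1 <= n) (u v w : DV n) :
  ~ (DE' u v /\ DE' v w /\ DE' u w).
Proof.
move=> [[[a [/DPath_walk uv ha]]|[a [/DPath_walk vu ha]]]
        [[[b [/DPath_walk vw hb]]|[b [/DPath_walk wv hb]]]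
         [[c [/DPath_walk uw hc]]|[c [/DPath_walk wu hc]]]]].
- by have := walk_Edge_length_uniq (walk_cat uv vw) uw; lia.
- by have := walk_Edge_closed (walk_cat (walk_cat uv vw) wu); lia.
- by have := walk_Edge_length_uniq (walk_cat uw wv) uv; lia.
- by have := walk_Edge_length_uniq (walk_cat wu uv) wv; lia.
- by have := walk_Edge_length_uniq (walk_cat vu uw) vw; lia.
- by have := walk_Edge_length_uniq (walk_cat vw wu) vu; lia.
- by have := walk_Edge_closed (walk_cat (walk_cat vu uw) wv); lia.
- by have := walk_Edge_length_uniq (walk_cat wv vu) wu; lia.
Qed.
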